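(* Let $G$ be a circle of circumference $1$, let $x_1,\dots,x_n\in G$ be pairwise distinct with no two of them antipodal, and let $y_1,\dots,y_n\in G$. Let $\{x_i,x_j\}\in A$ be a nearly antipodal pair. If $$\sum_{k=1}^n d(x_i,x_k)+\sum_{k=1}^n d(x_j,x_k)>\sum_{k=1}^n d(x_i,y_k)+\sum_{k=1}^n d(x_j,y_k),$$ then $\alpha^Y_{ij}>\alpha^X_{ij}$.
   Context: $d(x,y)$ is the length of the shorter arc between $x,y$; $\hat{x}$ is the antipodal point of $x$. For points $p,q$ that are neither equal nor antipodal, $(p,q)$ denotes the shorter open arc and $[p,q]$ the shorter closed arc between them. Two distinct points $x_i,x_j$ ($i\ne j$) form a nearly antipodal pair if no $x_k$ lies in $(x_i,\hat{x}_j)$ or in $(x_j,\hat{x}_i)$; $A$ is the set of nearly antipodal pairs. The critical arc of $\{x_i,x_j\}\in A$ is $\mathrm{crit}(x_i,x_j)=G\setminus[\hat{x}_i,\hat{x}_j]$ (the long open arc between $\hat x_i$ and $\hat x_j$). $\alpha^X_{ij}=|\{k:x_k\in\mathrm{crit}(x_i,x_j)\}|$ and $\alpha^Y_{ij}=|\{k:y_k\in\mathrm{crit}(x_i,x_j)\}|$. *)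

(* The circle G of circumference 1 is modelled as the
   half-open interval [0,1) of a real field R, with addition mod 1. *)
From HB Require Import structures.
From mathcomp Require Import all_boot all_order all_algebra.
Set Implicit Arguments. Unset Strict Implicit. Unset Printing Implicit Defensive.
Import Order.TTheory GRing.Theory Num.Theory.
Local Open Scope ring_scope.

Section Circle.
Variable R : realFieldType.

Definition onG (x : R) : bool := (0 <= x) && (x < 1).

Definition ccw (p q : R) : R := if p <= q then q - p else q - p + 1.

Definition dist (x y : R) : R := Num.min (ccw x y) (ccw y x).

Definition antip (x : R) : R := if x < 2^-1 then x + 2^-1 else x - 2^-1.

Definition ccw_open (p q z : R) : bool := (0 < ccw p z) && (ccw p z < ccw p q).

(* (p,q): the shorter open arc between p and q (p, q neither equal nor antipodal) *)
Definition short_open (p q z : R) : bool :=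
  if ccw p q < 2^-1 then ccw_open p q z else ccw_open q p z.

Definition short_closed (p q z : R) : bool :=
  [|| z == p, z == q | short_open p q z].

Definition nearly_antipodal (n : nat) (x : 'I_n -> R) (i j : 'I_n) : Prop :=
  i != j /\
  forall k : 'I_n, ~~ short_open (x i) (antip (x j)) (x k) /\
                   ~~ short_open (x j) (antip (x i)) (x k).

Definition crit (n : nat) (x : 'I_n -> R) (i j : 'I_n) (z : R) : bool :=
  ~~ short_closed (antip (x i)) (antip (x j)) z.

(* alpha_{ij}^X (w = x) and alpha_{ij}^Y (w = y) *)
Definition alpha (n : nat) (x w : 'I_n -> R) (i j : 'I_n) : nat :=
  #|[set k : 'I_n | crit x i j (w k)]|.

End Circle.

From HB Require Import structures.
From mathcomp Require Import all_boot all_order all_algebra.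
From mathcomp Require Import lra.
Set Implicit Arguments. Unset Strict Implicit. Unset Printing Implicit Defensive.
Import Order.TTheory GRing.Theory Num.Theory.
Local Open Scope ring_scope.

(* For z on the circle put f(z) = d(x_i,z) + d(x_j,z) and
   D = d(x_i,x_j) <= 1/2.  Three facts about f drive the argument:
   - f(z) >= D for every z (triangle inequality);
   - f(z) = 1 - D for every z in the closed arc [x^_i, x^_j], i.e. outside
     crit(x_i,x_j);
   - f(x_k) = D whenever x_k lies in crit(x_i,x_j): as the pair is nearly
     antipodal, such an x_k lies on the short arc between x_i and x_j.
   Hence sum_k f(x_k) = n(1-D) - (1-2D) alpha^X exactly, while
   sum_k f(y_k) >= n(1-D) - (1-2D) alpha^Y, and sum_k f(y_k) < sum_k f(x_k)
   forces alpha^Y > alpha^X. *)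

(* Split on the innermost comparison test of the goal (after moving every
   hypothesis containing a test into the goal) until linear arithmetic
   closes each branch. *)
Ltac innermost_test :=
  match goal with |- context [if ?c then _ else _] =>
    lazymatch c with context [if _ then _ else _] => fail | _ => c end end.

Ltac arc_lra :=
  repeat match goal with H : context [if _ then _ else _] |- _ => revert H end;
  first [ lra
        | let c := innermost_test in case: (boolP c) => ? /=; intros; arc_lra ].

Section CircleGeometry.
Variable R : realFieldType.
Implicit Types a b c p q t z : R.

Lemma onG_antip p : onG p -> onG (antip p).
Proof. rewrite /onG /antip => *; arc_lra. Qed.

Lemma onG_ccw p q : onG p -> onG q -> onG (ccw p q).
Proof. rewrite /onG /ccw => *; arc_lra. Qed.

Lemma ccw_id a : ccw a a = 0.
Proof. by rewrite /ccw lexx subrr. Qed.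

Lemma antip0 : antip 0 = 2^-1 :> R.
Proof. by rewrite /antip invr_gt0 ltr0n add0r. Qed.

Lemma antip_lt p : p < 2^-1 -> antip p = p + 2^-1.
Proof. by rewrite /antip => ->. Qed.

Lemma antip_gt p : 2^-1 < p -> antip p = p - 2^-1.
Proof. by rewrite /antip => /ltW; rewrite leNgt => /negbTE ->. Qed.

Lemma dist0 t : onG t -> dist 0 t = if t <= 2^-1 then t else 1 - t.
Proof. rewrite /onG /dist /ccw /Order.min => *; arc_lra. Qed.

Lemma dist_ccw p q : onG p -> onG q -> dist p q = dist 0 (ccw p q).
Proof. rewrite /onG /dist /ccw /Order.min => *; arc_lra. Qed.

Lemma dist_le_half p q : onG p -> onG q -> dist p q <= 2^-1.
Proof. rewrite /onG /dist /ccw /Order.min => *; arc_lra. Qed.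

Lemma ccw_rot a p q : onG a -> onG p -> onG q -> ccw (ccw a p) (ccw a q) = ccw p q.
Proof. rewrite /onG /ccw => *; arc_lra. Qed.

Lemma ccw_antip a p : onG a -> onG p -> ccw a (antip p) = antip (ccw a p).
Proof. rewrite /onG /ccw /antip => *; arc_lra. Qed.

Lemma ccw_inj a p q : onG a -> onG p -> onG q -> ccw a p = ccw a q -> p = q.
Proof. rewrite /onG /ccw => *; arc_lra. Qed.

Lemma ccw_half_antip a b : onG a -> onG b -> ccw a b = 2^-1 -> a = antip b.
Proof. rewrite /onG /ccw /antip => *; arc_lra. Qed.

Lemma short_open_rot a p q z : onG a -> onG p -> onG q -> onG z ->
  short_open (ccw a p) (ccw a q) (ccw a z) = short_open p q z.
Proof. by move=> Ha Hp Hq Hz; rewrite /short_open /ccw_open !ccw_rot. Qed.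

Lemma short_closed_rot a p q z : onG a -> onG p -> onG q -> onG z ->
  short_closed (ccw a p) (ccw a q) (ccw a z) = short_closed p q z.
Proof.
move=> Ha Hp Hq Hz; have eq_rot u v : onG u -> onG v -> (ccw a u == ccw a v) = (u == v).
  by move=> Hu Hv; apply/eqP/eqP => [/ccw_inj|->]; last done; apply.
by rewrite /short_closed !eq_rot // short_open_rot.
Qed.

Lemma dist_rot a p q : onG a -> onG p -> onG q -> dist (ccw a p) (ccw a q) = dist p q.
Proof. by move=> Ha Hp Hq; rewrite /dist !ccw_rot. Qed.

Lemma dist_sum_rot a b z : onG a -> onG b -> onG z ->
  dist a z + dist b z = dist 0 (ccw a z) + dist (ccw a b) (ccw a z).
Proof. by move=> Ha Hb Hz; rewrite (dist_ccw Ha Hz) dist_rot. Qed.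

Lemma dist_triangle0 c z : onG c -> onG z -> dist 0 c <= dist 0 z + dist c z.
Proof.
move=> Hc Hz; rewrite (dist_ccw Hc Hz) !dist0 ?(onG_ccw Hc Hz) //.
move: Hc Hz; rewrite /onG /ccw => *; arc_lra.
Qed.

Lemma dist_sum_antipodal_arc0 c z : onG c -> onG z ->
  short_closed (2^-1) (antip c) z -> dist 0 z + dist c z = 1 - dist 0 c.
Proof.
move=> Hc Hz; rewrite (dist_ccw Hc Hz) !dist0 ?(onG_ccw Hc Hz) //.
move: Hc Hz; rewrite /onG /short_closed /short_open /ccw_open /antip /ccw => *.
arc_lra.
Qed.

Lemma dist_sum_between0 c z : onG c -> onG z -> 0 < c -> c != 2^-1 ->
  ~~ short_open 0 (antip c) z -> ~~ short_open c (2^-1) z ->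
  ~~ short_closed (2^-1) (antip c) z -> dist 0 z + dist c z = dist 0 c.
Proof.
move=> Hc Hz c_gt0; rewrite (dist_ccw Hc Hz) !dist0 ?(onG_ccw Hc Hz) //.
rewrite neq_lt => /orP[c_half|c_half]; rewrite ?(antip_lt c_half) ?(antip_gt c_half);
  move: Hc Hz; rewrite /onG /short_closed /short_open /ccw_open /ccw => *; arc_lra.
Qed.

Lemma dist_triangle a b z : onG a -> onG b -> onG z -> dist a b <= dist a z + dist b z.
Proof.
move=> Ha Hb Hz; rewrite (dist_sum_rot Ha Hb Hz) (dist_ccw Ha Hb).
by apply: dist_triangle0; apply: onG_ccw.
Qed.

Lemma dist_sum_antipodal_arc a b z : onG a -> onG b -> onG z ->
  short_closed (antip a) (antip b) z -> dist a z + dist b z = 1 - dist a b.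
Proof.
move=> Ha Hb Hz; rewrite (dist_sum_rot Ha Hb Hz) (dist_ccw Ha Hb).
rewrite -(short_closed_rot Ha (onG_antip Ha) (onG_antip Hb) Hz) !ccw_antip //.
by rewrite ccw_id antip0; apply: dist_sum_antipodal_arc0; apply: onG_ccw.
Qed.

(* A point avoiding the arcs (a,b^), (b,a^) and [a^,b^] lies on the short arc
   between a and b, so that f(z) = d(a,b). *)
Lemma dist_sum_between a b z : onG a -> onG b -> onG z -> a != b -> a != antip b ->
  ~~ short_open a (antip b) z -> ~~ short_open b (antip a) z ->
  ~~ short_closed (antip a) (antip b) z -> dist a z + dist b z = dist a b.
Proof.
move=> Ha Hb Hz Hab Hab_antip; rewrite (dist_sum_rot Ha Hb Hz) (dist_ccw Ha Hb).
rewrite -(short_open_rot Ha Ha (onG_antip Hb) Hz).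
rewrite -(short_open_rot Ha Hb (onG_antip Ha) Hz).
rewrite -(short_closed_rot Ha (onG_antip Ha) (onG_antip Hb) Hz).
rewrite !ccw_antip // ccw_id antip0.
have Hc := onG_ccw Ha Hb; apply: (dist_sum_between0 Hc (onG_ccw Ha Hz)).
- rewrite lt_def; move: Hc => /andP[-> _]; rewrite andbT.
  apply: contra Hab => /eqP c0; apply/eqP/(ccw_inj Ha Ha Hb); by rewrite ccw_id.
- by apply: contra Hab_antip => /eqP/(ccw_half_antip Ha Hb)->.
Qed.

End CircleGeometry.

Lemma sum_two_valued (V : zmodType) (n : nat) (d e : V) (sel : 'I_n -> bool) :
  \sum_(k < n) (if sel k then d else e) = e *+ n - (e - d) *+ #|[set k | sel k]|.
Proof.
have -> : \sum_(k < n) (if sel k then d else e)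
          = \sum_(k < n) (e - (if sel k then e - d else 0)).
  by apply: eq_bigr => k _; case: (sel k); rewrite ?subr0 ?opprB ?subrKC.
rewrite sumrB sumr_const card_ord -big_mkcond /= -sumr_const.
by congr (_ - _); apply: eq_bigl => k; rewrite inE.
Qed.

Theorem mainTheorem8 (R : realFieldType) (n : nat) (x y : 'I_n -> R) (i j : 'I_n) :
  (forall k, onG (x k)) ->
  (forall k, onG (y k)) ->
  injective x ->
  (forall k l : 'I_n, x k != antip (x l)) ->
  nearly_antipodal x i j ->
  \sum_(k < n) dist (x i) (y k) + \sum_(k < n) dist (x j) (y k)
    < \sum_(k < n) dist (x i) (x k) + \sum_(k < n) dist (x j) (x k) ->
  (alpha x x i j < alpha x y i j)%N.
Proof.
move=> Hx Hy x_inj no_antip [i_neq_j near] sum_lt.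
have Hi := Hx i; have Hj := Hx j.
have xij_neq : x i != x j by apply: contra i_neq_j => /eqP/x_inj ->.
set D := dist (x i) (x j).
have off_crit w : onG w -> ~~ crit x i j w -> dist (x i) w + dist (x j) w = 1 - D.
  by move=> Hw; rewrite /crit negbK; apply: dist_sum_antipodal_arc.
have sumX : \sum_(k < n) (dist (x i) (x k) + dist (x j) (x k))
            = (1 - D) *+ n - (1 - D - D) *+ alpha x x i j.
  rewrite /alpha -sum_two_valued; apply: eq_bigr => k _.
  case: ifP => [crit_k|/negbT]; last exact: off_crit.
  case: (near k) => avoid_i avoid_j.
  exact: (dist_sum_between Hi Hj (Hx k) xij_neq (no_antip i j) avoid_i avoid_j crit_k).
have sumY : (1 - D) *+ n - (1 - D - D) *+ alpha x y i j
            <= \sum_(k < n) (dist (x i) (y k) + dist (x j) (y k)).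
  rewrite /alpha -sum_two_valued; apply: ler_sum => k _.
  case: ifP => [_|/negbT]; first exact: dist_triangle.
  by move/(off_crit _ (Hy k))->.
rewrite ltnNge; apply/negP => alpha_le.
have D_le_half : D <= 2^-1 := dist_le_half Hi Hj.
have gap_ge0 : 0 <= 1 - D - D by lra.
have := ler_wpMn2l gap_ge0 alpha_le; move: sumX sumY sum_lt; rewrite !big_split /=.
set N := (1 - D) *+ n; set AX := _ *+ alpha x x i j; set AY := _ *+ alpha x y i j.
clearbody N AX AY; lra.
Qed.
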